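(* Let $G$ be a connected graph of order $n$ and let $k\ge\chi(G)$ be an integer. Then $\overline{\mathrm{scs}}(G,k)=n$ if and only if $k>\chi(G)$, and likewise $\overline{\mathrm{lcs}}(G,k)=n$ if and only if $k>\chi(G)$.
   Context: All graphs are finite and simple. For a graph $G=(V,E)$ and an integer $k\ge\chi(G)$, a proper $k$-colouring is a map $c:V\to[k]$ with $c(u)\neq c(v)$ for every edge $uv$. A set $S\subseteq V$ is a determining set for $(G,c)$ if there is no proper $k$-colouring $c'\neq c$ of $G$ with $c'(s)=c(s)$ for all $s\in S$. A critical set for $(G,c)$ is an inclusion-minimal determining set. $\mathrm{scs}(G,c)$ and $\mathrm{lcs}(G,c)$ are the sizes of a smallest resp. largest critical set for $(G,c)$. $\overline{\mathrm{scs}}(G,k)$ and $\overline{\mathrm{lcs}}(G,k)$ are the maxima of $\mathrm{scs}(G,c)$ resp. $\mathrm{lcs}(G,c)$ over all proper $k$-colourings $c$ of $G$. *)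

From mathcomp Require Import all_boot.
Set Implicit Arguments. Unset Strict Implicit. Unset Printing Implicit Defensive.

(* A finite simple graph: vertex type T : finType, symmetric irreflexive
   adjacency relation e : rel T.  Colours are 'I_k (i.e. [k] shifted by one). *)

Section Colouring.
Variables (T : finType) (e : rel T).

Definition proper (k : nat) (c : {ffun T -> 'I_k}) : bool :=
  [forall x, forall y, e x y ==> (c x != c y)].

Definition colourable (k : nat) : bool :=
  [exists c : {ffun T -> 'I_k}, proper c].

(* chromatic number: least k admitting a proper k-colouring
   (for a simple graph, k = #|T| always works, so the minimum over
   k <= #|T| is the true chromatic number). *)
Definition chi : nat :=
  \big[minn/#|T|]_(k < #|T|.+1 | colourable k) (k : nat).

Definition determining (k : nat) (c : {ffun T -> 'I_k}) (S : {set T}) : bool :=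
  [forall c' : {ffun T -> 'I_k},
     (proper c' && [forall s in S, c' s == c s]) ==> (c' == c)].

Definition critical (k : nat) (c : {ffun T -> 'I_k}) (S : {set T}) : bool :=
  determining c S && [forall S' : {set T}, (S' \proper S) ==> ~~ determining c S'].

(* smallest / largest critical set sizes (critical sets always exist,
   since setT is determining, so the defaults are never used) *)
Definition scs (k : nat) (c : {ffun T -> 'I_k}) : nat :=
  \big[minn/#|T|]_(S : {set T} | critical c S) #|S|.

Definition lcs (k : nat) (c : {ffun T -> 'I_k}) : nat :=
  \max_(S : {set T} | critical c S) #|S|.

Definition scs_bar (k : nat) : nat :=
  \max_(c : {ffun T -> 'I_k} | proper c) scs c.

Definition lcs_bar (k : nat) : nat :=
  \max_(c : {ffun T -> 'I_k} | proper c) lcs c.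

End Colouring.

(* If chi(G) < k, a chi(G)-colouring read as a k-colouring leaves some colour
   unused, and any single vertex can be recoloured with it; so only V(G)
   determines the colouring and V(G) is its unique critical set.  If
   k <= chi(G) and V(G) were critical for some proper k-colouring c, every
   vertex would have a free colour (one differing from its own and from its
   neighbours'); recolouring the independent top colour class of c with free
   colours gives a proper (k-1)-colouring, which is absurd.  So every critical
   set then misses a vertex. *)

From Pilot Require Import Defs.
From mathcomp Require Import all_boot all_order.
Import Order.TTheory.

Set Implicit Arguments.
Unset Strict Implicit.
Unset Printing Implicit Defensive.

Lemma bigmax_ltn (I : finType) (P : pred I) (F : I -> nat) m :
  0 < m -> (forall i, P i -> F i < m) -> \max_(i | P i) F i < m.
Proof.
move=> m_gt0 ltFm; rewrite -(prednK m_gt0) ltnS.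
by apply/bigmax_leqP => i /ltFm; rewrite -(prednK m_gt0).
Qed.

Section Chromatic.
Variables (T : finType) (e : rel T).

Lemma chi_le j : colourable e j -> chi e <= j.
Proof.
move=> colj; rewrite /chi -minEnat -leEnat.
have [le_j_n | lt_n_j] := leqP j #|T|.
  pose j' : 'I_#|T|.+1 := Ordinal (le_j_n : j < #|T|.+1).
  exact: (bigmin_le_cond _ (fun i : 'I__ => i : nat) (colj : colourable e j')).
by rewrite leEnat (leq_trans _ (ltnW lt_n_j)) // -leEnat bigmin_le_id.
Qed.

Hypothesis e_irr : irreflexive e.

Lemma colourable_card : colourable e #|T|.
Proof.
apply/existsP; exists [ffun x => enum_rank x].
apply/forallP => x; apply/forallP => y; apply/implyP => exy; rewrite !ffunE.
by apply: contraTneq exy => /enum_rank_inj ->; rewrite e_irr.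
Qed.

Lemma colourable_chi : colourable e (chi e).
Proof.
rewrite /chi; elim/big_ind: _ => //; first exact: colourable_card.
by move=> a b cola colb; rewrite /minn; case: ifP.
Qed.

End Chromatic.

Section CriticalSets.
Variables (T : finType) (e : rel T) (k : nat).
Implicit Types (c : {ffun T -> 'I_k}) (S : {set T}).

Lemma determining_setT c : determining e c setT.
Proof.
apply/forallP => c'; apply/implyP => /andP[_ /forallP agree].
by apply/eqP/ffunP => x; apply/eqP; have := agree x; rewrite in_setT.
Qed.

Lemma critical_exists c : exists S, critical e c S.
Proof.
have [S detS minS] := arg_minnP (fun S : {set T} => #|S|) (determining_setT c).
exists S; rewrite /critical detS; apply/forallP => S'; apply/implyP => ltS'S.
by apply/negP => /minS; rewrite leqNgt proper_card.
Qed.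

Lemma scs_le_card c S : critical e c S -> scs e c <= #|S|.
Proof. by rewrite /scs -minEnat -leEnat; apply: bigmin_le_cond. Qed.

Lemma card_le_lcs c S : critical e c S -> #|S| <= lcs e c.
Proof. exact: leq_bigmax_cond. Qed.

Lemma scs_le c : scs e c <= #|T|.
Proof. by rewrite /scs -minEnat -leEnat bigmin_le_id. Qed.

Lemma lcs_le c : lcs e c <= #|T|.
Proof. by apply/bigmax_leqP => S _; apply: max_card. Qed.

Lemma scs_bar_le : scs_bar e k <= #|T|.
Proof. by apply/bigmax_leqP => c _; apply: scs_le. Qed.

Lemma lcs_bar_le : lcs_bar e k <= #|T|.
Proof. by apply/bigmax_leqP => c _; apply: lcs_le. Qed.

Lemma scs_lt c :
  (forall S, critical e c S -> #|S| < #|T|) -> scs e c < #|T|.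
Proof.
move=> small; have [S critS] := critical_exists c.
exact: leq_ltn_trans (scs_le_card critS) (small S critS).
Qed.

End CriticalSets.

Section Recolouring.
Variables (T : finType) (e : rel T).
Hypotheses (e_sym : symmetric e) (e_irr : irreflexive e).

Definition free_colour k (c : {ffun T -> 'I_k}) (v : T) (a : 'I_k) : bool :=
  (a != c v) && [forall u, e v u ==> (c u != a)].

Definition set_colour k (c : {ffun T -> 'I_k}) (v : T) (a : 'I_k) :
  {ffun T -> 'I_k} :=
  [ffun x => if x == v then a else c x].

Lemma proper_edge k (c : {ffun T -> 'I_k}) x y :
  Defs.proper e c -> e x y -> c x != c y.
Proof. by move=> /forallP/(_ x)/forallP/(_ y)/implyP. Qed.

Lemma proper_set_colour k (c : {ffun T -> 'I_k}) v a :
  Defs.proper e c -> free_colour c v a -> Defs.proper e (set_colour c v a).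
Proof.
move=> pc /andP[_ /forallP freea]; apply/forallP => x; apply/forallP => y.
apply/implyP => exy; rewrite !ffunE.
have [xv | xv] := eqVneq x v; have [yv | yv] := eqVneq y v; subst.
- by rewrite e_irr in exy.
- by rewrite eq_sym; apply: (implyP (freea y)).
- by rewrite e_sym in exy; apply: (implyP (freea x)).
- exact: proper_edge.
Qed.

Lemma free_colour_of_critical_setT k (c : {ffun T -> 'I_k}) v :
  critical e c setT -> exists a, free_colour c v a.
Proof.
case/andP=> _ /forallP/(_ (setT :\ v)); rewrite properD1 ?inE //=.
case/forallPn => c'; rewrite negb_imply.
case/andP=> /andP[pc' /forallP agree] c'_neq_c.
have c'E x : x != v -> c' x = c x.
  by move=> xv; apply/eqP; apply: (implyP (agree x)); rewrite !inE xv.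
exists (c' v); apply/andP; split.
  apply: contra c'_neq_c => /eqP c'v; apply/eqP/ffunP => x.
  by have [-> | /c'E] := eqVneq x v.
apply/forallP => u; apply/implyP => evu.
have uv : u != v by apply: contraTneq evu => ->; rewrite e_irr.
by rewrite -(c'E u uv) eq_sym; apply: proper_edge.
Qed.

Lemma colourable_of_avoiding_top k (c : {ffun T -> 'I_k.+1}) :
  Defs.proper e c -> (forall v, c v != ord_max) -> colourable e k.
Proof.
move=> pc avoid.
have lt_c_k v : c v < k by rewrite ltn_neqAle -ltnS ltn_ord andbT avoid.
apply/existsP; exists [ffun v => Ordinal (lt_c_k v)].
apply/forallP => x; apply/forallP => y; apply/implyP => exy; rewrite !ffunE.
exact: proper_edge pc exy.
Qed.

Lemma colourable_of_free_top_class k (c : {ffun T -> 'I_k.+1}) :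
  Defs.proper e c -> (forall v, c v = ord_max -> exists a, free_colour c v a) ->
  colourable e k.
Proof.
move=> pc free.
pose g v :=
  if c v == ord_max then odflt (c v) [pick a | free_colour c v a] else c v.
have gfree v : c v = ord_max -> free_colour c v (g v).
  move=> cv; rewrite /g cv eqxx; case: pickP => [a // | nofree].
  by have [a] := free v cv; rewrite nofree.
apply: (@colourable_of_avoiding_top _ [ffun v => g v]).
  (* The top colour class is independent, so recoloured vertices are never
     adjacent to one another. *)
  apply/forallP => x; apply/forallP => y; apply/implyP => exy; rewrite !ffunE.
  have [cx | cx] := eqVneq (c x) ord_max;
    have [cy | cy] := eqVneq (c y) ord_max.
  - by move: (proper_edge pc exy); rewrite cx cy eqxx.
  - case/andP: (gfree x cx) => _ /forallP/(_ y)/implyP/(_ exy).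
    by rewrite /g (negbTE cy) eq_sym.
  - rewrite e_sym in exy.
    case/andP: (gfree y cy) => _ /forallP/(_ x)/implyP/(_ exy).
    by rewrite /g (negbTE cx).
  - by rewrite /g (negbTE cx) (negbTE cy); apply: proper_edge.
move=> v; rewrite ffunE; have [cv | cv] := eqVneq (c v) ord_max.
  by case/andP: (gfree v cv); rewrite cv.
by rewrite /g (negbTE cv).
Qed.

Lemma critical_setT_chi_lt k (c : {ffun T -> 'I_k}) : 0 < #|T| ->
  Defs.proper e c -> critical e c setT -> chi e < k.
Proof.
case/card_gt0P=> x0 _; case: k c => [|k] c pc critT; first by case: (c x0).
apply/chi_le/(colourable_of_free_top_class pc) => v _.
exact: free_colour_of_critical_setT.
Qed.

Lemma free_unused_colour k (c : {ffun T -> 'I_k}) z v :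
  (forall u, c u != z) -> free_colour c v z.
Proof.
move=> unused; rewrite /free_colour eq_sym unused.
by apply/forallP => u; rewrite unused implybT.
Qed.

Lemma determining_unused_colour k (c : {ffun T -> 'I_k}) z S :
  Defs.proper e c -> (forall u, c u != z) -> determining e c S -> S = setT.
Proof.
move=> pc unused detS; apply/setP => v; rewrite inE; apply: contraT => vNS.
have /implyP := forallP detS (set_colour c v z).
rewrite proper_set_colour ?free_unused_colour //=.
have -> : [forall s in S, set_colour c v z s == c s].
  apply/forall_inP => s sS; rewrite ffunE.
  by have [sv | //] := eqVneq s v; rewrite -sv sS in vNS.
move=> /(_ isT)/eqP/ffunP/(_ v); rewrite ffunE eqxx => zE.
by have := unused v; rewrite zE eqxx.
Qed.

Lemma critical_unused_colour k (c : {ffun T -> 'I_k}) z :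
  Defs.proper e c -> (forall u, c u != z) ->
  forall S, critical e c S = (S == setT).
Proof.
move=> pc unused S; apply/idP/eqP => [/andP[detS _] | ->].
  exact: determining_unused_colour detS.
rewrite /critical determining_setT; apply/forall_inP => S' ltS'T.
apply: contraTN ltS'T => /(determining_unused_colour pc unused) ->.
by rewrite properxx.
Qed.

Lemma exists_colouring_unused_colour k : chi e < k ->
  exists (c : {ffun T -> 'I_k}) (z : 'I_k),
    Defs.proper e c /\ forall u, c u != z.
Proof.
move=> lt_chi_k; have /existsP[c0 pc0] := colourable_chi e_irr.
exists [ffun v => widen_ord (ltnW lt_chi_k) (c0 v)], (Ordinal lt_chi_k); split.
  apply/forallP => x; apply/forallP => y; apply/implyP => exy; rewrite !ffunE.
  exact: proper_edge pc0 exy.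
by move=> u; rewrite ffunE -val_eqE /= neq_ltn ltn_ord.
Qed.

Lemma scs_unused_colour k (c : {ffun T -> 'I_k}) z :
  Defs.proper e c -> (forall u, c u != z) -> scs e c = #|T|.
Proof.
move=> pc unused; apply/eqP; rewrite eqn_leq scs_le /scs -minEnat -leEnat.
apply: le_bigmin => // S.
by rewrite (critical_unused_colour pc unused) => /eqP ->; rewrite cardsT.
Qed.

Lemma lcs_unused_colour k (c : {ffun T -> 'I_k}) z :
  Defs.proper e c -> (forall u, c u != z) -> lcs e c = #|T|.
Proof.
move=> pc unused; apply/eqP; rewrite eqn_leq lcs_le -{1}cardsT card_le_lcs //.
by rewrite (critical_unused_colour pc unused).
Qed.

End Recolouring.


Theorem theorem5 (T : finType) (e : rel T)
  (e_sym : symmetric e) (e_irr : irreflexive e)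
  (G_conn : forall x y : T, connect e x y) (G_nonempty : 0 < #|T|)
  (k : nat) (hk : chi e <= k) :
  (scs_bar e k = #|T| <-> chi e < k) /\ (lcs_bar e k = #|T| <-> chi e < k).
Proof.
have [lt_chi_k | le_k_chi] := ltnP (chi e) k.
  have [c [z [pc unused]]] := exists_colouring_unused_colour e_irr lt_chi_k.
  have scs_bar_ge : #|T| <= scs_bar e k.
    rewrite -(scs_unused_colour e_sym e_irr pc unused).
    exact: leq_bigmax_cond.
  have lcs_bar_ge : #|T| <= lcs_bar e k.
    rewrite -(lcs_unused_colour e_sym e_irr pc unused).
    exact: leq_bigmax_cond.
  by split; split=> // _; apply/eqP; rewrite eqn_leq ?scs_bar_le ?lcs_bar_le.
have small (c : {ffun T -> 'I_k}) S :
    Defs.proper e c -> critical e c S -> #|S| < #|T|.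
  move=> pc critS; rewrite -cardsT proper_card // properT.
  apply: contraTneq le_k_chi => ST; rewrite -ltnNge.
  by rewrite ST in critS; apply: critical_setT_chi_lt G_nonempty pc critS.
have scs_bar_lt : scs_bar e k < #|T|.
  by apply: bigmax_ltn => // c pc; apply: scs_lt => S; apply: small.
have lcs_bar_lt : lcs_bar e k < #|T|.
  by apply: bigmax_ltn => // c pc; apply: bigmax_ltn => // S; apply: small.
by split; split=> // /eqP; rewrite ltn_eqF.
Qed.
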